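(* Let $\gamma>1$. Among functions $\chi(\pi)=\dfrac{\pi^2+c_1\pi+c_2}{c_3\pi+c_4}$ ($c_3\neq0$) satisfying $\chi(0)=0$, $\chi(1/3)=1/3$, $\chi'(0)=\gamma$, $\chi'(1/3)=1/2$, one has $$\chi(\pi)=\frac{\pi[\gamma+3\pi(\gamma-2)]}{1+3\pi(2\gamma-3)}.$$ For this $\chi$, the compressibility inequalities $0<\chi<1$, $\zeta(\pi)>0$, $\eta(\pi)>0$ hold for all $\pi\in(0,1/3)$; the function $e$ with $e'/e=\pi/((\chi-\pi)(\pi+1))$, $e(0)=1$, is $$e(\pi)=\frac{(1+\pi)^{\frac{5-3\gamma}{2(\gamma-1)}}}{\sqrt{1-3\pi}},\qquad\text{so } e^2(\pi)(1-3\pi)=(1+\pi)^{\frac{5-3\gamma}{\gamma-1}};$$ and the Taub inequality $e^2(\pi)(1-3\pi)\ge1$ holds for all $\pi\in(0,1/3)$ if and only if $1<\gamma\le5/3$.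
   Context: $\zeta(\pi)\equiv(1+\pi)(\chi-\pi)\chi'+2\chi(1-\chi)$, $\eta(\pi)\equiv(2\pi+1)\chi-\pi$. The variable $\pi=p/\rho\in(0,1/3)$, $\chi$ is the squared speed of sound of a generic ideal gas, $e=\rho/n$ its specific energy. *)

From Stdlib Require Import Reals.
From Coquelicot Require Export Coquelicot.
Open Scope R_scope.

Definition chi_gen (c1 c2 c3 c4 : R) (p : R) : R :=
  (p ^ 2 + c1 * p + c2) / (c3 * p + c4).

Definition chi (g : R) (p : R) : R :=
  p * (g + 3 * p * (g - 2)) / (1 + 3 * p * (2 * g - 3)).

Definition zeta (ch : R -> R) (p : R) : R :=
  (1 + p) * (ch p - p) * Derive ch p + 2 * ch p * (1 - ch p).

Definition eta (ch : R -> R) (p : R) : R :=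
  (2 * p + 1) * ch p - p.

Definition e_formula (g : R) (p : R) : R :=
  Rpower (1 + p) ((5 - 3 * g) / (2 * (g - 1))) / sqrt (1 - 3 * p).

Definition e_ode (g : R) (e : R -> R) : Prop :=
  forall p, 0 < p < 1/3 ->
    e p <> 0 /\ is_derive e p (e p * (p / ((chi g p - p) * (p + 1)))).

Definition e_init (e : R -> R) : Prop :=
  e 0 = 1 /\ filterlim e (at_right 0) (locally 1).

(* Clearing the denominator, the four interpolation conditions force
   c2 = 0, c1 = γ c4, c3 = 3(γ-1) c4 + 1 and 3(γ-2) c4 = 1, which is chi with
   numerator and denominator scaled by 1/(3(γ-2)).  On (0,1/3) the denominator
   1 + 3π(2γ-3) of chi is positive, and the compressibility inequalities become
   polynomial inequalities in γ-1 > 0 and 1-3π ∈ (0,1) whose terms are visibly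
   positive.  By partial fractions the ODE reads
   e'/e = (5-3γ)/(2(γ-1)(1+π)) + 3/(2(1-3π)), solved by e_formula; any other
   solution is a constant multiple of it, and the constant is 1 by continuity at 0.
   Finally e²(1-3π) = (1+π)^((5-3γ)/(γ-1)), which is ≥ 1 iff the exponent is ≥ 0. *)

From Stdlib Require Import Reals Lra.
From Coquelicot Require Import Coquelicot.
Open Scope R_scope.

Lemma is_derive_chi_gen c1 c2 c3 c4 p : c3 * p + c4 <> 0 ->
  is_derive (chi_gen c1 c2 c3 c4) p
    (((2 * p + c1) * (c3 * p + c4) - (p ^ 2 + c1 * p + c2) * c3) / (c3 * p + c4) ^ 2).
Proof. intros Hd. unfold chi_gen. auto_derive; [exact Hd | field; exact Hd]. Qed.

Lemma chi_gen_value_eq c1 c2 c3 c4 p v : c3 * p + c4 <> 0 ->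
  chi_gen c1 c2 c3 c4 p = v -> p ^ 2 + c1 * p + c2 = v * (c3 * p + c4).
Proof. intros Hd Hv. rewrite <- Hv. unfold chi_gen. field. exact Hd. Qed.

Lemma chi_gen_slope_eq c1 c2 c3 c4 p v : c3 * p + c4 <> 0 ->
  is_derive (chi_gen c1 c2 c3 c4) p v ->
  (2 * p + c1) * (c3 * p + c4) - (p ^ 2 + c1 * p + c2) * c3 = v * (c3 * p + c4) ^ 2.
Proof.
  intros Hd Hv.
  rewrite <- (is_derive_unique _ _ _ Hv), (is_derive_unique _ _ _ (is_derive_chi_gen c1 c2 c3 c4 p Hd)).
  field. exact Hd.
Qed.

Lemma chi_gen_coefficients g c1 c2 c3 c4 :
  c3 * 0 + c4 <> 0 -> c3 * (1/3) + c4 <> 0 ->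
  chi_gen c1 c2 c3 c4 0 = 0 -> chi_gen c1 c2 c3 c4 (1/3) = 1/3 ->
  is_derive (chi_gen c1 c2 c3 c4) 0 g -> is_derive (chi_gen c1 c2 c3 c4) (1/3) (1/2) ->
  c2 = 0 /\ c1 = g * c4 /\ c3 = 3 * (g - 1) * c4 + 1 /\ 3 * (g - 2) * c4 = 1.
Proof.
  intros H0 H13 E0 E13 D0 D13.
  apply chi_gen_value_eq in E0, E13; auto.
  apply chi_gen_slope_eq in D0, D13; auto.
  assert (Hc4 : c4 <> 0) by (contradict H0; rewrite H0; ring).
  assert (Hc2 : c2 = 0) by lra.
  subst c2.
  assert (Hc1 : c1 = g * c4).
  { apply (Rmult_eq_reg_r c4); [nra | exact Hc4]. }
  subst c1.
  assert (Hc3 : c3 = 3 * (g - 1) * c4 + 1) by lra.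
  split; [reflexivity | split; [reflexivity | split; [exact Hc3 |]]].
  set (D := c3 * (1/3) + c4) in *.
  assert (Hslope : 2/3 + g * c4 - c3 / 3 = D / 2).
  { apply (Rmult_eq_reg_r D); [| exact H13].
    replace ((1/3) ^ 2 + g * c4 * (1/3) + 0) with (D / 3) in D13 by lra.
    nra. }
  unfold D in Hslope. lra.
Qed.

(* Both fractions differ by the factor 3(γ-2) ≠ 0 in numerator and denominator,
   so the identity holds for every p, even where the denominators vanish. *)
Lemma chi_gen_eq_chi g c1 c2 c3 c4 p :
  c2 = 0 -> c1 = g * c4 -> c3 = 3 * (g - 1) * c4 + 1 -> 3 * (g - 2) * c4 = 1 ->
  chi_gen c1 c2 c3 c4 p = chi g p.
Proof.
  intros -> -> -> Hk.
  assert (Hk0 : 3 * (g - 2) <> 0) by (intro H; rewrite H in Hk; lra).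
  unfold chi_gen, chi.
  rewrite <- (Rdiv_mult_r_r (3 * (g - 2)) _ _ Hk0).
  f_equal.
  - transitivity (3 * (g - 2) * p ^ 2 + g * p * (3 * (g - 2) * c4)); [| rewrite Hk]; ring.
  - transitivity (3 * (g - 1) * p * (3 * (g - 2) * c4) + 3 * (g - 2) * p + 3 * (g - 2) * c4);
      [| rewrite Hk]; ring.
Qed.

Lemma chi_denominator_pos g p : 1 < g -> 0 <= p < 1/3 -> 0 < 1 + 3 * p * (2 * g - 3).
Proof.
  intros hg Hp.
  assert (0 <= p * (g - 1)) by (apply Rmult_le_pos; lra).
  lra.
Qed.

(* With s = γ-1 and t = 1-3π this is 3 (1 + 3π(2γ-3))^3 ζ(π) / π. *)
Definition zeta_numerator (s t : R) : R :=
  t ^ 3 * (4 + 2 * t) + s * t ^ 2 * (24 - 6 * t - 9 * t ^ 2)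
  + s ^ 2 * t * (48 - 48 * t - 10 * t ^ 2 + 13 * t ^ 3)
  + s ^ 3 * (1 - t) ^ 2 * (32 - 6 * t ^ 2).

Lemma zeta_numerator_pos s t : 0 < s -> 0 < t < 1 -> 0 < zeta_numerator s t.
Proof.
  intros Hs Ht. unfold zeta_numerator.
  assert (0 < t ^ 3 * (4 + 2 * t)) by (apply Rmult_lt_0_compat; [apply pow_lt |]; lra).
  assert (0 < s * t ^ 2 * (24 - 6 * t - 9 * t ^ 2)).
  { apply Rmult_lt_0_compat; [apply Rmult_lt_0_compat; [| apply pow_lt] |]; nra. }
  assert (0 < s ^ 2 * t * (48 - 48 * t - 10 * t ^ 2 + 13 * t ^ 3)).
  { apply Rmult_lt_0_compat; [apply Rmult_lt_0_compat; [apply pow_lt |] |]; nra. }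
  assert (0 <= s ^ 3 * (1 - t) ^ 2 * (32 - 6 * t ^ 2)).
  { apply Rmult_le_pos; [apply Rmult_le_pos; apply pow_le |]; nra. }
  lra.
Qed.

Lemma is_derive_chi g p : 1 + 3 * p * (2 * g - 3) <> 0 ->
  is_derive (chi g) p
    ((g + 6 * (g - 2) * p + 9 * (g - 2) * (2 * g - 3) * p ^ 2) / (1 + 3 * p * (2 * g - 3)) ^ 2).
Proof. intros Hd. unfold chi. auto_derive; [exact Hd | field; exact Hd]. Qed.

Section ChiOnDomain.
Variables (g p : R).
Hypotheses (hg : 1 < g) (Hp : 0 < p < 1/3).

Local Notation D := (1 + 3 * p * (2 * g - 3)).

Let D_pos : 0 < D.
Proof. apply chi_denominator_pos; lra. Qed.

Let D_neq0 : D <> 0.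
Proof. apply Rgt_not_eq, D_pos. Qed.

Lemma chi_sub_id : chi g p - p = p * (g - 1) * (1 - 3 * p) / D.
Proof. unfold chi. field. exact D_neq0. Qed.

Lemma chi_pos : 0 < chi g p.
Proof. apply Rdiv_lt_0_compat; [nra | exact D_pos]. Qed.

Lemma chi_lt_1 : chi g p < 1.
Proof.
  assert (E : 1 - chi g p = ((1 - p) * (1 - 3 * p) + (g - 1) * p * (5 - 3 * p)) / D)
    by (unfold chi; field; exact D_neq0).
  assert (0 < (1 - p) * (1 - 3 * p)) by nra.
  assert (0 < (g - 1) * p * (5 - 3 * p)) by (apply Rmult_lt_0_compat; nra).
  enough (0 < 1 - chi g p) by lra.
  rewrite E. apply Rdiv_lt_0_compat; [lra | exact D_pos].
Qed.

Lemma zeta_chi_pos : zeta (chi g) p > 0.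
Proof.
  assert (E : zeta (chi g) p = p * zeta_numerator (g - 1) (1 - 3 * p) / (3 * D ^ 3)).
  { unfold zeta. rewrite (is_derive_unique _ _ _ (is_derive_chi g p D_neq0)).
    unfold chi, zeta_numerator. field. exact D_neq0. }
  rewrite E. apply Rdiv_lt_0_compat.
  - apply Rmult_lt_0_compat; [lra | apply zeta_numerator_pos; lra].
  - apply Rmult_lt_0_compat; [lra | apply pow_lt, D_pos].
Qed.

Lemma eta_chi_pos : eta (chi g) p > 0.
Proof.
  assert (E : eta (chi g) p = p * ((g - 1) * (1 - p + 6 * p ^ 2) + 2 * p * (1 - 3 * p)) / D)
    by (unfold eta, chi; field; exact D_neq0).
  rewrite E. apply Rdiv_lt_0_compat; [| exact D_pos].
  assert (0 < (g - 1) * (1 - p + 6 * p ^ 2)) by (apply Rmult_lt_0_compat; nra).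
  assert (0 < p * (1 - 3 * p)) by nra.
  nra.
Qed.

End ChiOnDomain.

Lemma is_derive_zero_eq (h : R -> R) a b :
  (forall x, a < x < b -> is_derive h x 0) ->
  forall x y, a < x < b -> a < y < b -> h x = h y.
Proof.
  intros Hh x y Hx Hy.
  assert (Hin : forall z, Rmin x y <= z <= Rmax x y -> a < z < b).
  { intros z Hz. split.
    - apply Rlt_le_trans with (Rmin x y); [apply Rmin_glb_lt |]; lra.
    - apply Rle_lt_trans with (Rmax x y); [| apply Rmax_lub_lt]; lra. }
  destruct (MVT_gen h x y (fun _ => 0)) as [z [_ Hz]].
  - intros z Hz. apply Hh, Hin. lra.
  - intros z Hz. apply continuity_pt_filterlim, (ex_derive_continuous h).
    exists 0. apply Hh, Hin, Hz.
  - lra.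
Qed.

Lemma linear_ode_proportional (f e k : R -> R) a b :
  (forall x, a < x < b -> f x <> 0 /\ is_derive f x (f x * k x)) ->
  (forall x, a < x < b -> is_derive e x (e x * k x)) ->
  forall y, a < y < b -> forall x, a < x < b -> e x = e y / f y * f x.
Proof.
  intros Hf He y Hy.
  assert (Hq : forall x, a < x < b -> is_derive (fun t => e t / f t) x 0).
  { intros x Hx. destruct (Hf x Hx) as [Hfx Hdf].
    replace 0 with ((e x * k x * f x - e x * (f x * k x)) / f x ^ 2) by (field; exact Hfx).
    apply is_derive_div; [apply He, Hx | exact Hdf | exact Hfx]. }
  intros x Hx.
  rewrite <- (is_derive_zero_eq _ a b Hq x y Hx Hy).
  field. apply Hf, Hx.
Qed.

Lemma chi_log_derivative g p : 1 < g -> 0 < p < 1/3 ->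
  p / ((chi g p - p) * (p + 1)) = (5 - 3 * g) / (2 * (g - 1)) / (1 + p) + 3 / (2 * (1 - 3 * p)).
Proof.
  intros hg Hp.
  assert (0 < 1 + 3 * p * (2 * g - 3)) by (apply chi_denominator_pos; lra).
  rewrite chi_sub_id by assumption.
  field. repeat split; nra.
Qed.

Lemma e_formula_pos g p : -1 < p < 1/3 -> 0 < e_formula g p.
Proof.
  intros Hp. apply Rdiv_lt_0_compat; [apply exp_pos | apply sqrt_lt_R0; lra].
Qed.

Lemma is_derive_e_formula g p : -1 < p < 1/3 ->
  is_derive (e_formula g) p
    (e_formula g p * ((5 - 3 * g) / (2 * (g - 1)) / (1 + p) + 3 / (2 * (1 - 3 * p)))).
Proof.
  intros Hp. unfold e_formula, Rpower.
  assert (0 < sqrt (1 - 3 * p)) by (apply sqrt_lt_R0; lra).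
  assert (Hsq : sqrt (1 - 3 * p) * sqrt (1 - 3 * p) = 1 - 3 * p) by (apply sqrt_sqrt; lra).
  auto_derive; replace (1 + - (3 * p)) with (1 - 3 * p) by ring.
  - repeat split; lra.
  - set (a := (5 - 3 * g) / (2 * (g - 1))). set (S := sqrt (1 - 3 * p)) in *.
    rewrite <- Hsq. field. lra.
Qed.

Lemma e_formula_ode g : 1 < g -> e_ode g (e_formula g).
Proof.
  intros hg p Hp. split.
  - apply Rgt_not_eq, e_formula_pos. lra.
  - rewrite chi_log_derivative by assumption. apply is_derive_e_formula. lra.
Qed.

Lemma e_formula_0 g : e_formula g 0 = 1.
Proof.
  unfold e_formula, Rpower.
  rewrite Rplus_0_r, Rmult_0_r, Rminus_0_r, ln_1, Rmult_0_r, exp_0, sqrt_1.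
  apply Rdiv_1_r.
Qed.

Lemma e_formula_continuous_0 g : filterlim (e_formula g) (locally 0) (locally 1).
Proof.
  rewrite <- (e_formula_0 g).
  apply (ex_derive_continuous (e_formula g)). eexists. apply is_derive_e_formula. lra.
Qed.

Lemma e_formula_init g : e_init (e_formula g).
Proof.
  split; [apply e_formula_0 |].
  eapply filterlim_filter_le_1; [apply filter_le_within | apply e_formula_continuous_0].
Qed.

Lemma e_ode_unique g (e : R -> R) : 1 < g -> e_ode g e -> e_init e ->
  forall p, 0 <= p < 1/3 -> e p = e_formula g p.
Proof.
  intros hg He [He0 Hlim] p Hp.
  set (c := e (1/6) / e_formula g (1/6)).
  assert (Hprop : forall x, 0 < x < 1/3 -> e x = c * e_formula g x).
  { apply (linear_ode_proportional _ _ (fun x => x / ((chi g x - x) * (x + 1))) 0 (1/3)).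
    - apply e_formula_ode, hg.
    - intros x Hx. apply He, Hx.
    - lra. }
  assert (Hlim_c : filterlim e (at_right 0) (locally (c * e_formula g 0))).
  { apply filterlim_ext_loc with (fun x => c * e_formula g x).
    - assert (H3 : 0 < 1/3) by lra.
      exists (mkposreal _ H3). intros y Hy Hy0.
      change (Rabs (y - 0) < 1/3) in Hy. simpl in Hy0.
      apply Rabs_lt_between in Hy.
      symmetry. apply Hprop. lra.
    - eapply filterlim_filter_le_1; [apply filter_le_within |].
      apply (ex_derive_continuous (fun x => c * e_formula g x)).
      eexists. apply is_derive_scal, is_derive_e_formula. lra. }
  assert (Hc : c = 1).
  { rewrite e_formula_0, Rmult_1_r in Hlim_c.
    exact (filterlim_locally_unique (FF := Proper_StrongProper _ (at_right_proper_filter 0))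
             e c 1 Hlim_c Hlim). }
  destruct (Req_dec p 0) as [-> | Hp0].
  - rewrite He0, e_formula_0. reflexivity.
  - rewrite Hprop, Hc by lra. apply Rmult_1_l.
Qed.

Lemma e_formula_sq_mul g p : 1 < g -> p < 1/3 ->
  e_formula g p ^ 2 * (1 - 3 * p) = Rpower (1 + p) ((5 - 3 * g) / (g - 1)).
Proof.
  intros hg Hp. unfold e_formula.
  replace ((5 - 3 * g) / (g - 1)) with ((5 - 3 * g) / (2 * (g - 1)) + (5 - 3 * g) / (2 * (g - 1)))
    by (field; lra).
  rewrite Rpower_plus.
  assert (0 < sqrt (1 - 3 * p)) by (apply sqrt_lt_R0; lra).
  assert (Hsq : sqrt (1 - 3 * p) * sqrt (1 - 3 * p) = 1 - 3 * p) by (apply sqrt_sqrt; lra).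
  set (S := sqrt (1 - 3 * p)) in *. rewrite <- Hsq. field. lra.
Qed.

Lemma Rpower_ge_1 x y : 1 < x -> 1 <= Rpower x y <-> 0 <= y.
Proof.
  intros Hx. rewrite <- (Rpower_O x) at 1 by lra. split; intros H.
  - destruct (Rle_lt_dec 0 y) as [| Hy]; [assumption |].
    pose proof (Rpower_lt x y 0 Hx Hy). lra.
  - apply Rle_Rpower; lra.
Qed.

Lemma taub_inequality_iff g : 1 < g ->
  (forall p, 0 < p < 1/3 -> e_formula g p ^ 2 * (1 - 3 * p) >= 1) <-> g <= 5/3.
Proof.
  intros hg.
  assert (Hexp : 0 <= (5 - 3 * g) / (g - 1) <-> g <= 5/3).
  { split; intros H.
    - destruct (Rle_lt_dec g (5/3)) as [| Hg]; [assumption |].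
      assert ((5 - 3 * g) / (g - 1) < 0) by (apply Rdiv_neg_pos; lra).
      lra.
    - apply Rdiv_le_0_compat; lra. }
  rewrite <- Hexp. split.
  - intros H. specialize (H (1/6) ltac:(lra)).
    rewrite e_formula_sq_mul in H by lra.
    apply (Rpower_ge_1 (1 + 1/6)); lra.
  - intros H p Hp. rewrite e_formula_sq_mul by lra.
    apply Rle_ge, Rpower_ge_1; lra.
Qed.

Theorem mainTheorem4 (g : R) (hg : 1 < g) :
  (forall c1 c2 c3 c4 : R,
     c3 <> 0 ->
     (forall p, 0 <= p <= 1/3 -> c3 * p + c4 <> 0) ->
     chi_gen c1 c2 c3 c4 0 = 0 ->
     chi_gen c1 c2 c3 c4 (1/3) = 1/3 ->
     is_derive (chi_gen c1 c2 c3 c4) 0 g ->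
     is_derive (chi_gen c1 c2 c3 c4) (1/3) (1/2) ->
     forall p, 0 <= p <= 1/3 -> chi_gen c1 c2 c3 c4 p = chi g p) /\
  (forall p, 0 < p < 1/3 ->
     0 < chi g p < 1 /\ zeta (chi g) p > 0 /\ eta (chi g) p > 0) /\
  (e_ode g (e_formula g) /\ e_init (e_formula g) /\
   (forall e : R -> R, e_ode g e -> e_init e ->
      forall p, 0 <= p < 1/3 -> e p = e_formula g p) /\
   (forall p, 0 <= p < 1/3 ->
      (e_formula g p) ^ 2 * (1 - 3 * p) = Rpower (1 + p) ((5 - 3 * g) / (g - 1)))) /\
  ((forall p, 0 < p < 1/3 -> (e_formula g p) ^ 2 * (1 - 3 * p) >= 1) <-> g <= 5/3).
Proof.
  split; [| split; [| split]].
  - intros c1 c2 c3 c4 _ Hden E0 E13 D0 D13 p _.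
    destruct (chi_gen_coefficients g c1 c2 c3 c4 (Hden 0 ltac:(lra)) (Hden (1/3) ltac:(lra))
                E0 E13 D0 D13) as (Hc2 & Hc1 & Hc3 & Hc4).
    exact (chi_gen_eq_chi g c1 c2 c3 c4 p Hc2 Hc1 Hc3 Hc4).
  - intros p Hp.
    repeat split; [apply chi_pos | apply chi_lt_1 | apply zeta_chi_pos | apply eta_chi_pos];
      assumption.
  - split; [apply e_formula_ode, hg |].
    split; [apply e_formula_init |].
    split; [intros e; apply e_ode_unique, hg |].
    intros p Hp. apply e_formula_sq_mul; lra.
  - apply taub_inequality_iff, hg.
Qed.
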